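(* (i) If $v=2k$ is even, then $\mathrm{A}_q(v,2)=\sum_{0\le i\le v,\ i\equiv k\ (\mathrm{mod}\ 2)}\begin{bmatrix}v\\i\end{bmatrix}_q$, and the unique set of subspaces of $\mathbb{F}_q^v$ of this size with pairwise subspace distance $\ge2$ is the set of all subspaces $X$ with $\dim X\equiv k\pmod 2$. (ii) If $v=2k+1$ is odd, then $\mathrm{A}_q(v,2)=\sum_{i\text{ even}}\begin{bmatrix}v\\i\end{bmatrix}_q=\sum_{i\text{ odd}}\begin{bmatrix}v\\i\end{bmatrix}_q$, and there are exactly two sets of subspaces of $\mathbb{F}_q^v$ of this size with pairwise distance $\ge2$, namely the set of all even-dimensional subspaces and the set of all odd-dimensional subspaces; these two codes are isomorphic.
   Context: $\mathrm{d}_{\mathrm{S}}(X,Y)=\dim(X+Y)-\dim(X\cap Y)$. $\mathrm{A}_q(v,d)$ is the maximum size of a set of subspaces of $\mathbb{F}_q^v$ with pairwise subspace distance $\geq d$. Gaussian binomial $\begin{bmatrix}n\\k\end{bmatrix}_q$ = number of $k$-dimensional subspaces of $\mathbb{F}_q^n$. Two codes are isomorphic if some $\mathrm{d}_{\mathrm{S}}$-isometry of the subspace lattice of $\mathbb{F}_q^v$ maps one onto the other. *)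

From HB Require Import structures.
From mathcomp Require Import all_boot all_order all_algebra all_field.
Set Implicit Arguments. Unset Strict Implicit. Unset Printing Implicit Defensive.
Import GRing.Theory.
Local Open Scope ring_scope.

Import VectorInternalTheory.
Section SubspaceFin.
Variables (F : finFieldType) (n : nat).
HB.instance Definition _ := [Countable of {vspace 'rV[F]_n} by <:].
HB.instance Definition _ := [Finite of {vspace 'rV[F]_n} by <:].
End SubspaceFin.

(* The subspaces of F^v (F a finite field, F = F_q with q = #|F|). *)
Notation subspace F v := {vspace 'rV[F]_v}.

Definition dS (F : finFieldType) (v : nat) (X Y : subspace F v) : nat :=
  (\dim (X + Y) - \dim (X :&: Y))%N.

Definition is_code (F : finFieldType) (v d : nat) (C : {set subspace F v}) : bool :=
  [forall X in C, forall Y in C, (X != Y) ==> (d <= dS X Y)%N].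

Definition Aq (F : finFieldType) (v d : nat) : nat :=
  \max_(C : {set subspace F v} | is_code d C) #|C|.

Definition gauss (F : finFieldType) (n k : nat) : nat :=
  #|[set X : subspace F n | \dim X == k]|.

Definition dS_isometry (F : finFieldType) (v : nat) (f : subspace F v -> subspace F v) : Prop :=
  bijective f /\ forall X Y, dS (f X) (f Y) = dS X Y.

Definition codes_isomorphic (F : finFieldType) (v : nat) (C1 C2 : {set subspace F v}) : Prop :=
  exists f, dS_isometry f /\ f @: C1 = C2.

From HB Require Import structures.
From mathcomp Require Import all_boot all_order all_algebra all_field.
From mathcomp Require Import ring lra zify.

Set Implicit Arguments. Unset Strict Implicit. Unset Printing Implicit Defensive.
Import Order.TTheory GRing.Theory Num.Theory.

(* Let y_a be the proportion of the a-dimensional subspaces of F^n that lie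
   in a code C of minimum distance 2.  A subspace and a subspace covering it are
   at distance 1, so double counting the covering pairs between levels a and
   a + 1 gives y_a + y_(a+1) <= 1, and |C| = \sum_a w_a y_a, with
   w_a = [n, a]_q, is bounded by a linear program on a path whose weights are
   symmetric and increase up to the middle.  The alternating sums
   z_a = w_a - w_(a-1) + ... are a positive dual solution; for even n one also
   needs w_(n/2) > 2 w_(n/2 - 1).  At the optimum every constraint is tight, so
   y alternates between 0 and 1, which pins down the extremal codes.
   Orthogonal complementation is a d_S-isometry sending dimension a to n - a:
   it gives the symmetry of the weights, counts the subspaces covered by a
   given one, and for odd n exchanges the two optimal codes. *)

Section OrthogonalComplement.
Variables (F : fieldType) (n : nat).
Local Open Scope ring_scope.
Local Notation V := 'rV[F]_n.
Implicit Types (X Y : {vspace V}) (u x : V).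

Definition dotv u x : F := \sum_(j < n) u 0 j * x 0 j.

Lemma dotvC u x : dotv u x = dotv x u.
Proof. by apply: eq_bigr => j _; rewrite mulrC. Qed.

Lemma dotvDr u x1 x2 : dotv u (x1 + x2) = dotv u x1 + dotv u x2.
Proof. by rewrite /dotv -big_split; apply: eq_bigr => j _; rewrite mxE mulrDr. Qed.

Lemma dotvZr u a x : dotv u (a *: x) = a * dotv u x.
Proof. by rewrite /dotv mulr_sumr; apply: eq_bigr => j _; rewrite mxE mulrCA. Qed.

Lemma dotv_sumr u I (r : seq I) (P : pred I) (f : I -> V) :
  dotv u (\sum_(i <- r | P i) f i) = \sum_(i <- r | P i) dotv u (f i).
Proof.
elim/big_rec2: _ => [|i y x _ <-]; last by rewrite dotvDr.
by rewrite /dotv big1 // => j _; rewrite mxE mulr0.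
Qed.

Definition basis_mx X : 'M[F]_(\dim X, n) := \matrix_(i, j) (vbasis X)`_i 0 j.

Definition orth_map X : 'Hom(V, 'rV[F]_(\dim X)) := linfun (mulmxr (basis_mx X)^T).

Definition orthv X : {vspace V} := lker (orth_map X).

Lemma orthvP X u : reflect {in X, forall x, dotv u x = 0} (u \in orthv X).
Proof.
rewrite memv_ker lfunE /=.
have dot_basis i : (u *m (basis_mx X)^T) 0 i = dotv u (vbasis X)`_i.
  by rewrite mxE; apply: eq_bigr => j _; rewrite !mxE.
apply: (iffP eqP) => [u_ker x Xx | u_orth].
  rewrite (coord_vbasis Xx) dotv_sumr big1 // => i _.
  by rewrite dotvZr -dot_basis u_ker mxE mulr0.
by apply/rowP => i; rewrite dot_basis mxE u_orth // vbasis_mem ?memt_nth.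
Qed.

Lemma orthvS X Y : (X <= Y)%VS -> (orthv Y <= orthv X)%VS.
Proof.
move/subvP=> sXY; apply/subvP => u /orthvP uY; apply/orthvP => x Xx.
exact/uY/sXY.
Qed.

Lemma orthvD X Y : orthv (X + Y) = (orthv X :&: orthv Y)%VS.
Proof.
apply/vspaceP => u; rewrite memv_cap.
apply/orthvP/andP => [uXY | [/orthvP uX /orthvP uY]].
  by split; apply/orthvP => x Xx; apply: uXY;
    [exact: subvP (addvSl X Y) _ Xx | exact: subvP (addvSr X Y) _ Xx].
by move=> _ /memv_addP[x Xx [y Yy ->]]; rewrite dotvDr uX // uY // addr0.
Qed.

Lemma sub_orthvK X : (X <= orthv (orthv X))%VS.
Proof.
by apply/subvP => x Xx; apply/orthvP => u /orthvP uX; rewrite dotvC uX.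
Qed.

Lemma orthv_fullv : orthv fullv = 0%VS.
Proof.
apply/eqP; rewrite -subv0; apply/subvP => u /orthvP u_orth.
rewrite memv0; apply/eqP/rowP => j; rewrite mxE.
have := u_orth (delta_mx 0 j) (memvf _).
rewrite /dotv (bigD1 j) //= big1 => [|l /negbTE nlj]; last by rewrite mxE nlj andbF mulr0.
by rewrite !mxE !eqxx mulr1 addr0.
Qed.

Lemma dimv_leqn X : (\dim X <= n)%N.
Proof. by have := dimvS (subvf X); rewrite dimvf dim_matrix mul1r. Qed.

Lemma dim_orthv_ge X : (n - \dim X <= \dim (orthv X))%N.
Proof.
have := limg_ker_dim (orth_map X) fullv.
rewrite capfv dimvf dim_matrix mul1r -/(orthv X).
have := dimvS (subvf (orth_map X @: fullv)); rewrite dimvf dim_matrix mul1r.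
(* [lia] needs the dimensions generalized to plain variables. *)
move: (\dim (limg _)) (\dim (orthv X)) => l o; lia.
Qed.

Lemma dim_orthv X : \dim (orthv X) = (n - \dim X)%N.
Proof.
have := dim_orthv_ge X; have := dim_orthv_ge X^C.
rewrite dimv_compl dimvf dim_matrix mul1r.
have := dimv_sum_cap (orthv X) (orthv X^C).
rewrite -orthvD addv_complf orthv_fullv dimv0.
have := dimv_leqn (orthv X + orthv X^C); have := dimv_leqn X.
lia.
Qed.

Lemma orthvK : involutive orthv.
Proof.
move=> X; apply/eqP; rewrite eq_sym eqEdim sub_orthvK !dim_orthv.
have := dimv_leqn X; lia.
Qed.

Lemma orthv_inj : injective orthv. Proof. exact: inv_inj orthvK. Qed.

Lemma orthvI X Y : orthv (X :&: Y) = (orthv X + orthv Y)%VS.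
Proof. by rewrite -{1}(orthvK X) -{1}(orthvK Y) -orthvD orthvK. Qed.

End OrthogonalComplement.

Arguments orthv {F n}.
Arguments orthvK {F n}.
Arguments orthv_inj {F n}.

Lemma dS_orthv (F : finFieldType) (n : nat) (X Y : subspace F n) :
  dS (orthv X) (orthv Y) = dS X Y.
Proof.
rewrite /dS -orthvD -orthvI !dim_orthv.
have := dimv_leqn (X + Y); have := dimvS (subv_trans (capvSl X Y) (addvSl X Y)).
move: (\dim (X :&: Y)) (\dim (X + Y)) => c s; lia.
Qed.

Section QInteger.
Variable q : nat.

Definition qint m := (\sum_(i < m) q ^ i)%N.

Lemma qintS m : qint m.+1 = (q * qint m).+1.
Proof.
rewrite /qint big_ord_recl expn0 big_distrr addnC addn1; congr _.+1.
by apply: eq_bigr => i _; rewrite lift0 expnS.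
Qed.

Lemma qint_gt0 m : (0 < qint m.+1)%N. Proof. by rewrite qintS. Qed.

Hypothesis q_gt0 : (0 < q)%N.

Lemma qint_geom m : (qint m * (q - 1) = q ^ m - 1)%N.
Proof.
elim: m => [|m IHm]; first by rewrite /qint big_ord0.
have : (0 < q ^ m)%N by rewrite expn_gt0 q_gt0.
rewrite qintS expnS; move: IHm; move: (qint m) (q ^ m)%N => x p; nia.
Qed.

Lemma ltn_qint : {homo qint : m m' / (m < m')%N}.
Proof.
apply: homo_ltn => [? ? ?|m]; first exact: ltn_trans.
by rewrite qintS ltnS leq_pmull.
Qed.

End QInteger.

Section Covers.
Variables (F : finFieldType) (n : nat).
Local Notation S := (subspace F n).
Local Notation q := #|F|.
Implicit Types (X Y : S) (C : {set S}).

Definition level a := [set X : S | \dim X == a].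

Definition covers X := [set Y | (\dim Y == (\dim X).+1) && (X <= Y)%VS].

Definition covered Y := [set X | ((\dim X).+1 == \dim Y) && (X <= Y)%VS].

Lemma dim_addv_line X w : w \notin X -> \dim (X + <[w]>) = (\dim X).+1.
Proof.
move=> Xw; have := dimv_sum_cap X <[w]>; rewrite dim_vline.
have : X != (X + <[w]>)%VS.
  by apply: contra Xw => /eqP ->; apply: subvP (addvSr _ _) _ (memv_line w).
rewrite eqEdim addvSl /= -ltnNge => lt_X_Xw.
have := leq_b1 (w != 0%R); move: (\dim _) (\dim _) (\dim _) lt_X_Xw => ? ? ?; lia.
Qed.

Lemma card_covers X : (\dim X < n)%N -> #|covers X| = qint q (n - \dim X).
Proof.
move=> ltXn; set a := \dim X.
have step_gt0 : (0 < q ^ a.+1 - q ^ a)%N by rewrite subn_gt0 ltn_exp2l ?finNzRing_gt1.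
apply/eqP; rewrite -(eqn_pmul2r step_gt0); apply/eqP.
have -> : (qint q (n - a) * (q ^ a.+1 - q ^ a) = q ^ n - q ^ a)%N.
  rewrite expnS -{2}[q ^ a]mul1n -mulnBl mulnA qint_geom ?(ltnW (finNzRing_gt1 F)) //.
  by rewrite mulnBl mul1n -expnD subnK // ltnW.
pose W := [set w : 'rV[F]_n | w \notin X].
have <- : #|W| = (q ^ n - q ^ a)%N.
  have card_rV : #|'rV[F]_n| = (q ^ n)%N by rewrite card_mx mul1n.
  rewrite -card_rV -(cardC (mem X)) card_vspace addKn.
  by apply: eq_card => w; rewrite !inE.
rewrite -sum_nat_const -sum1_card.
rewrite (partition_big (fun w => X + <[w]>)%VS (mem (covers X))) => [|w]; last first.
  by rewrite !inE => Xw; rewrite dim_addv_line // eqxx addvSl.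
apply: eq_bigr => Y; rewrite inE => /andP[/eqP dimY sXY]; rewrite sum1_card.
have -> : (q ^ a.+1 - q ^ a)%N = #|[predD Y & X]|.
  have card_YX : #|[predI mem Y & mem X]| = #|X|.
    by apply: eq_card => w; rewrite !inE andb_idl //; apply/subvP.
  by rewrite -dimY -!card_vspace -(cardID (mem X) (mem Y)) card_YX addKn.
apply: eq_card => w; rewrite !inE; apply/andP/andP => [[Xw Yw] | [Xw /eqP <-]].
  split; first by rewrite inE.
  by apply/eqP/eqP; rewrite eqEdim subv_add sXY -memvE Yw /= dim_addv_line // -dimY.
by move: Xw; rewrite inE; split; last exact: subvP (addvSr _ _) _ (memv_line w).
Qed.

Lemma covered_orthv Y : covered Y = orthv @^-1: covers (orthv Y).
Proof.
apply/setP => X; rewrite !inE !dim_orthv.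
have := dimv_leqn X; have := dimv_leqn Y.
move=> leYn leXn; apply/andP/andP => [[/eqP dimXY sXY] | [/eqP dimXY sXY]]; split.
- by apply/eqP; move: (\dim X) (\dim Y) dimXY leYn leXn => ? ?; lia.
- exact: orthvS.
- by apply/eqP; move: (\dim X) (\dim Y) dimXY leYn leXn => ? ?; lia.
- by rewrite -(orthvK X) -(orthvK Y) orthvS.
Qed.

Lemma card_covered Y : (0 < \dim Y)%N -> #|covered Y| = qint q (\dim Y).
Proof.
move=> dimY_gt0; have leYn := dimv_leqn Y.
rewrite covered_orthv card_preimset; last exact: orthv_inj.
rewrite card_covers dim_orthv.
  by congr qint; move: (\dim Y) dimY_gt0 leYn => ? ? ?; lia.
by move: (\dim Y) dimY_gt0 leYn => ? ? ?; lia.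
Qed.

Lemma sum_covers_covered a (f : S -> S -> nat) :
  (\sum_(X in level a) \sum_(Y in covers X) f X Y =
   \sum_(Y in level a.+1) \sum_(X in covered Y) f X Y)%N.
Proof.
under eq_bigr => X /[!inE] /eqP dimX.
  rewrite (eq_bigl (fun Y => (Y \in level a.+1) && (X <= Y)%VS)) => [|Y].
    over.
  by rewrite !inE dimX.
rewrite (exchange_big_dep (mem (level a.+1))) => [|X Y _ /andP[] //].
apply: eq_bigr => Y /[!inE] /eqP dimY; apply: eq_bigl => X.
by rewrite !inE dimY eqxx eqSS.
Qed.

Lemma gauss_mul_qint a : (a < n)%N ->
  (gauss F n a * qint q (n - a) = gauss F n a.+1 * qint q a.+1)%N.
Proof.
move=> lt_an; have := sum_covers_covered a (fun _ _ => 1%N).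
rewrite (eq_bigr (fun=> qint q (n - a))) => [|X /[!inE] /eqP dimX]; last first.
  by rewrite sum1_card card_covers dimX.
rewrite [RHS](eq_bigr (fun=> qint q a.+1)) => [|Y /[!inE] /eqP dimY]; last first.
  by rewrite sum1_card card_covered dimY.
by rewrite !sum_nat_const.
Qed.

Lemma dS_cover X Y : (X <= Y)%VS -> \dim Y = (\dim X).+1 -> dS X Y = 1%N.
Proof. by move=> sXY dimY; rewrite /dS (addv_idPr sXY) (capv_idPl sXY) dimY subSnn. Qed.

Lemma sum_mem_card (A C : {set S}) : (\sum_(X in A) (X \in C) = #|C :&: A|)%N.
Proof.
rewrite -sum1_card big_mkcond [RHS]big_mkcond /=; apply: eq_bigr => X _.
by rewrite !inE; case: (X \in C); case: (X \in A).
Qed.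

Lemma code_flags C a : is_code 2 C -> (a < n)%N ->
  (#|C :&: level a| * qint q (n - a) + #|C :&: level a.+1| * qint q a.+1
     <= gauss F n a * qint q (n - a))%N.
Proof.
move=> codeC lt_an.
have lower : (\sum_(X in level a) \sum_(Y in covers X) (X \in C)
              = #|C :&: level a| * qint q (n - a))%N.
  rewrite -sum_mem_card big_distrl; apply: eq_bigr => X /[!inE] /eqP dimX.
  by rewrite sum_nat_const card_covers dimX // mulnC.
have upper : (\sum_(X in level a) \sum_(Y in covers X) (Y \in C)
              = #|C :&: level a.+1| * qint q a.+1)%N.
  rewrite sum_covers_covered -sum_mem_card big_distrl.
  apply: eq_bigr => Y /[!inE] /eqP dimY.
  by rewrite sum_nat_const card_covered dimY // mulnC.
rewrite -lower -upper /gauss -sum_nat_const -big_split /=; apply: leq_sum => X /[!inE] /eqP dimX.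
rewrite -big_split -dimX -card_covers ?dimX // -sum1_card; apply: leq_sum => Y.
rewrite inE => /andP[/eqP dimY sXY].
(* a code of minimum distance 2 never contains both ends of a cover *)
case XC: (X \in C); case YC: (Y \in C) => //=.
have XY : X != Y by apply: contraPneq dimY => ->; apply: n_Sn.
move/forall_inP/(_ X XC)/forall_inP/(_ Y YC)/implyP/(_ XY): codeC.
by rewrite dS_cover.
Qed.

End Covers.

Section GaussianBinomials.
Variables (F : finFieldType) (n : nat).
Local Notation S := (subspace F n).
Local Notation q := #|F|.
Local Notation gauss := (gauss F n).

Lemma card_levels (A : {set S}) : #|A| = (\sum_(a < n.+1) #|A :&: level F n a|)%N.
Proof.
rewrite -sum1_card (partition_big (fun X : S => inord (\dim X) : 'I_n.+1) predT) //=.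
apply: eq_bigr => a _; rewrite sum1dep_card; apply: eq_card => X; rewrite !inE.
have ltXn : (\dim X < n.+1)%N by rewrite ltnS dimv_leqn.
congr (_ && _); apply/eqP/eqP => [<- | dimX]; first by rewrite inordK.
by apply: val_inj; rewrite /= inordK // dimX.
Qed.

Lemma card_dim_pred (P : pred nat) :
  #|[set X : S | P (\dim X)]| = (\sum_(0 <= a < n.+1 | P a) gauss a)%N.
Proof.
rewrite card_levels big_mkord [RHS]big_mkcond /=; apply: eq_bigr => a _.
case: ifP => Pa.
  apply: eq_card => X; rewrite !inE.
  by apply/andP/idP => [[] // | /eqP dimX]; rewrite dimX Pa.
apply/eqP; rewrite cards_eq0; apply/eqP/setP => X; rewrite !inE.
by apply/andP => -[PX /eqP dimX]; move: PX; rewrite dimX Pa.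
Qed.

Lemma gauss0 : gauss 0 = 1%N.
Proof. by rewrite -(cards1 (0%VS : S)); apply: eq_card => X; rewrite !inE dimv_eq0. Qed.

Lemma gaussC a : (a <= n)%N -> gauss (n - a) = gauss a.
Proof.
move=> le_an; rewrite /gauss -(card_preimset _ orthv_inj).
apply: eq_card => X; rewrite !inE dim_orthv.
by have := dimv_leqn X; move: (\dim X) => d ledn; apply/eqP/eqP; lia.
Qed.

Lemma gauss_gt0 a : (a <= n)%N -> (0 < gauss a)%N.
Proof.
elim: a => [|a IHa] lt_an; first by rewrite gauss0.
have := gauss_mul_qint F lt_an; have := IHa (ltnW lt_an); have := qint_gt0 q a.
have : (0 < qint q (n - a))%N by rewrite -(subnSK lt_an) qint_gt0.
move: (gauss a) (gauss a.+1) (qint q _) (qint q _) => ? ? ? ?; nia.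
Qed.

Lemma gauss_ltn a : (a.+1 < n - a)%N -> (gauss a < gauss a.+1)%N.
Proof.
move=> lt_a_na; have lt_an : (a < n)%N by lia.
have := gauss_mul_qint F lt_an; have := gauss_gt0 (ltnW lt_an).
have := ltn_qint (ltnW (finNzRing_gt1 F)) lt_a_na.
move: (gauss a) (gauss a.+1) (qint q _) (qint q _) => ? ? ? ?; nia.
Qed.

Lemma gauss_middle k : n = k.+1.*2 -> (2 * gauss k < gauss k.+1)%N.
Proof.
move=> def_n; have lt_kn : (k < n)%N by lia.
have := gauss_mul_qint F lt_kn; have -> : (n - k = k.+2)%N by lia.
rewrite qintS; have := gauss_gt0 (ltnW lt_kn); have := qint_gt0 q k.
have := finNzRing_gt1 F.
move: q (gauss k) (gauss k.+1) (qint q _) => r g g1 m r_gt1 m_gt0 g_gt0 E.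
by rewrite -(ltn_pmul2r m_gt0) -E; nia.
Qed.

End GaussianBinomials.

Local Open Scope ring_scope.

Section PathWeights.
Variable R : realFieldType.

Lemma sum_reflect (f : nat -> R) n m p : (m + p = n.+1)%N ->
  \sum_(a < n.+1) f a = \sum_(a < m) f a + \sum_(a < p) f (n - a)%N.
Proof.
move=> def_n; have le_m_n1 : (m <= n.+1)%N by lia.
rewrite -!(big_mkord xpredT) (big_cat_nat (leq0n m) le_m_n1) /=.
congr (_ + _); rewrite big_nat_rev (big_addn 0 _ m).
have -> : (n.+1 - m = p)%N by lia.
by rewrite big_mkord; apply: eq_bigr => a _; congr f; have := ltn_ord a; lia.
Qed.

Lemma leif_pair (x y0 y1 : R) : 0 < x -> y0 + y1 <= 1 ->
  x * y0 + x * y1 <= x ?= iff (y0 + y1 == 1).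
Proof.
move=> x_gt0 le_y1; rewrite -mulrDr; apply/leifP; case: eqP => [->|/eqP ne_y1].
  by rewrite mulr1.
by rewrite gtr_pMr // lt_neqAle ne_y1.
Qed.

Lemma leif_middle (x z y0 y1 y2 : R) : 0 < z -> 2 * z < x -> 0 <= y0 -> 0 <= y2 ->
    y0 + y1 <= 1 -> y1 + y2 <= 1 ->
  z * y0 + z * y2 + x * y1 <= x ?= iff (y1 == 1).
Proof.
move=> z_gt0 lt_2z_x y0_ge0 y2_ge0 le_y01 le_y12; apply/leifP.
case: eqP => [y1E | /eqP ne_y1].
  have [-> ->] : y0 = 0 /\ y2 = 0 by split; lra.
  by rewrite y1E !mulr0 mulr1 !add0r.
have y0_le : z * y0 <= z * (1 - y1) by rewrite ler_pM2l //; lra.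
have y2_le : z * y2 <= z * (1 - y1) by rewrite ler_pM2l //; lra.
have gap : 0 < (x - 2 * z) * (1 - y1).
  by rewrite mulr_gt0 // subr_gt0 // lt_neqAle ne_y1 /=; lra.
nra.
Qed.

Lemma pair_le1_reflect (y : nat -> R) n :
    (forall a, (a < n)%N -> y a + y a.+1 <= 1) ->
  forall a, (a < n)%N -> y (n - a)%N + y (n - a.+1)%N <= 1.
Proof.
move=> y_le1 a lt_an; have := y_le1 (n - a.+1)%N.
have -> : (n - a.+1).+1 = (n - a)%N by lia.
by rewrite addrC; apply; lia.
Qed.

Lemma tight_reflect (y : nat -> R) n k :
    (forall b, (b < k)%N -> y (n - b)%N + y (n - b.+1)%N = 1) ->
  forall a, (n - k <= a < n)%N -> y a + y a.+1 = 1.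
Proof.
move=> tight_y' a /andP[le_a lt_an]; have := tight_y' (n - a.+1)%N.
have -> : (n - (n - a.+1) = a.+1)%N by lia.
have -> : (n - (n - a.+1).+1 = a)%N by lia.
by rewrite addrC; apply; lia.
Qed.

Lemma tight_alternate (y : nat -> R) n : (forall a, (a < n)%N -> y a + y a.+1 = 1) ->
  forall a, (a <= n)%N -> y a = if odd a then 1 - y 0%N else y 0%N.
Proof.
move=> tight_y; elim=> [|a IHa] lt_an //=.
have := tight_y a lt_an; rewrite IHa ?(ltnW lt_an) //.
by case: (odd a) => /= ?; lra.
Qed.

Section AlternatingSum.
Variable w : nat -> R.

(* The dual solution of the linear program: [altsum a + altsum a.+1 = w a.+1]. *)
Fixpoint altsum a : R := if a is b.+1 then w b.+1 - altsum b else w 0%N.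

Lemma chain_identity (y : nat -> R) m :
  \sum_(a < m.+1) w a * y a + \sum_(a < m) altsum a * (1 - y a - y a.+1)
  = \sum_(a < m) altsum a + altsum m * y m.
Proof.
elim: m => [|m IHm]; first by rewrite !big_ord0 big_ord1 /= addr0 add0r.
rewrite big_ord_recr [X in _ + X]big_ord_recr [in RHS]big_ord_recr /=.
by rewrite addrACA -addrA [in LHS]addrA IHm; ring.
Qed.

Lemma sum_altsum m : \sum_(a < m.+1) w a = \sum_(a < m) altsum a + \sum_(a < m.+1) altsum a.
Proof.
elim: m => [|m IHm]; first by rewrite big_ord0 !big_ord1 add0r.
by rewrite big_ord_recr IHm !big_ord_recr /=; ring.
Qed.

Lemma sum_altsum_parity m : \sum_(a < m) altsum a = \sum_(a < m | odd a != odd m) w a.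
Proof.
elim/ltn_ind: m => -[|[|m]] IHm; first by rewrite !big_ord0.
  by rewrite big_ord1 big_mkcond big_ord1.
rewrite !big_ord_recr /= IHm // [RHS]big_mkcond !big_ord_recr /= -big_mkcond /=.
by rewrite negbK eqxx; case: (odd m) => /=; ring.
Qed.

Hypothesis w0_gt0 : 0 < w 0%N.

Lemma altsum_bounds m : (forall a, (a < m)%N -> w a < w a.+1) ->
  forall a, (a <= m)%N -> 0 < altsum a <= w a.
Proof.
move=> w_incr; elim=> [|a IHa] le_am /=; first by rewrite w0_gt0 lexx.
have /andP[za_gt0 za_le] := IHa (ltnW le_am); have := w_incr a le_am.
case: a IHa le_am za_gt0 za_le => [|a] IHa le_am /=; first by lra.
have /andP[] := IHa (ltnW le_am); have := w_incr a (ltnW le_am); lra.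
Qed.

Lemma chain_bound (y : nat -> R) m : (forall a, (a < m)%N -> w a < w a.+1) ->
    (forall a, (a < m)%N -> y a + y a.+1 <= 1) ->
  \sum_(a < m.+1) w a * y a <= \sum_(a < m) altsum a + altsum m * y m
    ?= iff [forall a : 'I_m, y a + y a.+1 == 1].
Proof.
move=> w_incr y_le1; rewrite -(chain_identity y m) addrC -leifBLR subrr.
apply: leif_0_sum => a _; rewrite -addrA -opprD.
have /andP[za_gt0 _] := altsum_bounds w_incr (ltnW (ltn_ord a)).
split; first by apply: mulr_ge0; [exact: ltW | rewrite subr_ge0 y_le1].
by rewrite eq_sym mulf_eq0 gt_eqF //= subr_eq0 eq_sym.
Qed.

End AlternatingSum.

Lemma odd_path_bound (w y : nat -> R) k : 0 < w 0%N ->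
    (forall a, (a < k)%N -> w a < w a.+1) ->
    (forall a, (a <= k.*2.+1)%N -> w (k.*2.+1 - a)%N = w a) ->
    (forall a, (a < k.*2.+1)%N -> y a + y a.+1 <= 1) ->
  \sum_(a < k.*2.+2) w a * y a <= \sum_(a < k.+1) w a /\
  (\sum_(a < k.*2.+2) w a * y a = \sum_(a < k.+1) w a ->
     forall a, (a < k.*2.+1)%N -> y a + y a.+1 = 1).
Proof.
move=> w0_gt0 w_incr w_sym y_le1; pose y' a := y (k.*2.+1 - a)%N.
have y'_le1 a : (a < k)%N -> y' a + y' a.+1 <= 1.
  by move=> lt_ak; apply: (pair_le1_reflect y_le1); lia.
have split_sum : \sum_(a < k.*2.+2) w a * y a
    = \sum_(a < k.+1) w a * y a + \sum_(a < k.+1) w a * y' a.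
  rewrite (sum_reflect (fun a => w a * y a) (m := k.+1) (p := k.+1)); last by lia.
  by congr (_ + _); apply: eq_bigr => a _; rewrite w_sym //; have := ltn_ord a; lia.
have lt_kn : (k < k.*2.+1)%N by lia.
have lower := chain_bound w0_gt0 (y := y) w_incr (fun a lt_ak => y_le1 a (ltn_trans lt_ak lt_kn)).
have upper := chain_bound w0_gt0 (y := y') w_incr y'_le1.
have /andP[zk_gt0 _] := altsum_bounds w0_gt0 w_incr (leqnn k).
have middle := leif_pair zk_gt0 (y_le1 k lt_kn).
have y'k : y' k = y k.+1 by rewrite /y'; congr y; lia.
have top : \sum_(a < k) altsum w a + altsum w k * y k
            + (\sum_(a < k) altsum w a + altsum w k * y' k)
          <= \sum_(a < k.+1) w a ?= iff (y k + y k.+1 == 1).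
  rewrite sum_altsum big_ord_recr /= y'k.
  set Z := \sum_(a < k) altsum w a; set z := altsum w k.
  have -> : Z + z * y k + (Z + z * y k.+1) = Z + Z + (z * y k + z * y k.+1) by ring.
  by rewrite (addrA Z) (mono_leif (lerD2l _)).
have [le_sum eq_sum] := leif_trans (leifD lower upper) top.
rewrite split_sum; split => // /eqP; rewrite eq_sum.
move=> /andP[/andP[/forallP tight_lo /forallP tight_hi] /eqP tight_k].
move=> a lt_an; case: (ltngtP a k) => [lt_ak | lt_ka | -> //].
  exact/eqP/(tight_lo (Ordinal lt_ak)).
apply: (tight_reflect (n := k.*2.+1) (k := k)) => [b lt_bk|]; last by lia.
exact/eqP/(tight_hi (Ordinal lt_bk)).
Qed.

Lemma sum_parity_even_path (w : nat -> R) k :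
    (forall a, (a <= k.+1.*2)%N -> w (k.+1.*2 - a)%N = w a) ->
  \sum_(a < k.+1.*2.+1 | odd a == odd k.+1) w a = 2 * \sum_(a < k) altsum w a + w k.+1.
Proof.
move=> w_sym; rewrite big_mkcond.
rewrite (sum_reflect (fun a => if odd a == odd k.+1 then w a else 0) (m := k.+1) (p := k.+2));
  last by lia.
rewrite [X in _ + X]big_ord_recr /= (_ : k.+1.*2 - k.+1 = k.+1)%N; last by lia.
have reflect_odd : \sum_(a < k.+1)
    (if odd (k.+1.*2 - a) == ~~ odd k then w (k.+1.*2 - a)%N else 0)
  = \sum_(a < k.+1) (if odd a == ~~ odd k then w a else 0).
  apply: eq_bigr => a _; have := ltn_ord a => lt_ak.
  by rewrite oddB ?odd_double ?w_sym //; lia.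
rewrite reflect_odd sum_altsum_parity big_ord_recr [in RHS]big_mkcond /= eqxx.
have -> : (odd k == ~~ odd k) = false by case: (odd k).
rewrite (eq_bigr (fun i : 'I_k => if odd i != odd k then w i else 0)) => [|i _].
  by ring.
by case: (odd i); case: (odd k).
Qed.

Lemma even_path_bound (w y : nat -> R) k : 0 < w 0%N ->
    (forall a, (a < k)%N -> w a < w a.+1) -> 2 * w k < w k.+1 ->
    (forall a, (a <= k.+1.*2)%N -> w (k.+1.*2 - a)%N = w a) ->
    (forall a, 0 <= y a) -> (forall a, (a < k.+1.*2)%N -> y a + y a.+1 <= 1) ->
  \sum_(a < k.+1.*2.+1) w a * y a <= \sum_(a < k.+1.*2.+1 | odd a == odd k.+1) w a /\
  (\sum_(a < k.+1.*2.+1) w a * y a = \sum_(a < k.+1.*2.+1 | odd a == odd k.+1) w a ->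
     y k.+1 = 1 /\ forall a, (a < k.+1.*2)%N -> y a + y a.+1 = 1).
Proof.
move=> w0_gt0 w_incr w_mid w_sym y_ge0 y_le1; pose y' a := y (k.+1.*2 - a)%N.
have lt_k1n : (k.+1 < k.+1.*2)%N by lia.
have y'_le1 a : (a < k)%N -> y' a + y' a.+1 <= 1.
  by move=> lt_ak; apply: (pair_le1_reflect y_le1); lia.
have split_sum : \sum_(a < k.+1.*2.+1) w a * y a
    = \sum_(a < k.+1) w a * y a + \sum_(a < k.+1) w a * y' a + w k.+1 * y k.+1.
  rewrite (sum_reflect (fun a => w a * y a) (m := k.+1) (p := k.+2)); last by lia.
  rewrite [X in _ + X]big_ord_recr /= (_ : k.+1.*2 - k.+1 = k.+1)%N; last by lia.
  rewrite addrA; congr (_ + _ + _); apply: eq_bigr => a _.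
  by rewrite w_sym //; have := ltn_ord a; lia.
have lower := chain_bound w0_gt0 (y := y) w_incr
  (fun a lt_ak => y_le1 a (ltn_trans lt_ak (ltnW lt_k1n))).
have upper := chain_bound w0_gt0 (y := y') w_incr y'_le1.
have /andP[zk_gt0 zk_le] := altsum_bounds w0_gt0 w_incr (leqnn k).
have lt_2zk : 2 * altsum w k < w k.+1 by apply: le_lt_trans w_mid; lra.
have middle := leif_middle zk_gt0 lt_2zk (y_ge0 k) (y_ge0 k.+2)
  (y_le1 k (ltnW lt_k1n)) (y_le1 k.+1 lt_k1n).
have y'k : y' k = y k.+2 by rewrite /y'; congr y; lia.
have top : \sum_(a < k) altsum w a + altsum w k * y k
            + (\sum_(a < k) altsum w a + altsum w k * y' k) + w k.+1 * y k.+1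
          <= 2 * \sum_(a < k) altsum w a + w k.+1 ?= iff (y k.+1 == 1).
  rewrite y'k; set Z := \sum_(a < k) altsum w a; set z := altsum w k.
  have -> : Z + z * y k + (Z + z * y k.+2) + w k.+1 * y k.+1
          = Z + Z + (z * y k + z * y k.+2 + w k.+1 * y k.+1) by ring.
  have -> : 2 * Z + w k.+1 = Z + Z + w k.+1 by ring.
  by rewrite (mono_leif (lerD2l _)).
have chains := leifD lower upper.
rewrite -(mono_leif (lerD2r (w k.+1 * y k.+1))) in chains.
have [le_sum eq_sum] := leif_trans chains top.
rewrite split_sum sum_parity_even_path //; split => // /eqP.
rewrite eq_sum => /andP[/andP[/forallP tight_lo /forallP tight_hi] /eqP y_mid].
have [y_k y_k2] : y k = 0 /\ y k.+2 = 0.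
  have := y_le1 k (ltnW lt_k1n); have := y_le1 k.+1 lt_k1n.
  have := y_ge0 k; have := y_ge0 k.+2; rewrite y_mid; split; lra.
split => // a lt_an; case: (ltngtP a k) => [lt_ak | lt_ka | ->]; last by rewrite y_k y_mid add0r.
  exact/eqP/(tight_lo (Ordinal lt_ak)).
case: (ltngtP a k.+1) => [| lt_k1a | ->]; [lia | | by rewrite y_mid y_k2 addr0].
apply: (tight_reflect (n := k.+1.*2) (k := k)) => [b lt_bk|]; last by lia.
exact/eqP/(tight_hi (Ordinal lt_bk)).
Qed.

End PathWeights.

Lemma ratio_pair_le1 (R : realFieldType) (c0 c1 g0 g1 N M : R) :
    0 < g0 -> 0 < g1 -> 0 < N -> g0 * N = g1 * M -> c0 * N + c1 * M <= g0 * N ->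
  c0 / g0 + c1 / g1 <= 1.
Proof.
move=> g0_gt0 g1_gt0 N_gt0 eq_gN le_cN.
have e0 : c0 / g0 * (g0 * N) = c0 * N by rewrite mulrA divfK ?gt_eqF.
have e1 : c1 / g1 * (g0 * N) = c1 * M by rewrite eq_gN mulrA divfK ?gt_eqF.
by rewrite -(ler_pM2r (mulr_gt0 g0_gt0 N_gt0)) mul1r mulrDl e0 e1.
Qed.

Section LevelDensities.
Variables (F : finFieldType) (n : nat).
Local Notation S := (subspace F n).
Implicit Types (C : {set S}) (a : nat).

Definition weight a : rat := (gauss F n a)%:R.

Definition density C a : rat := #|C :&: level F n a|%:R / weight a.

Lemma weight_gt0 a : (a <= n)%N -> 0 < weight a.
Proof. by move=> le_an; rewrite ltr0n gauss_gt0. Qed.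

Lemma density_ge0 C a : 0 <= density C a.
Proof. by rewrite divr_ge0 ?ler0n. Qed.

Lemma density_pair_le1 C a : is_code 2 C -> (a < n)%N ->
  density C a + density C a.+1 <= 1.
Proof.
move=> codeC lt_an; apply: (@ratio_pair_le1 _ _ _ _ _ (qint #|F| (n - a))%:R (qint #|F| a.+1)%:R).
- exact: weight_gt0 (ltnW lt_an).
- exact: weight_gt0 lt_an.
- by rewrite ltr0n -(subnSK lt_an) qint_gt0.
- by rewrite -!natrM gauss_mul_qint.
- by rewrite -!natrM -natrD ler_nat code_flags.
Qed.

Lemma card_density C : #|C|%:R = \sum_(a < n.+1) weight a * density C a.
Proof.
rewrite card_levels natr_sum; apply: eq_bigr => a _.
by rewrite mulrC divfK // gt_eqF // weight_gt0 // -ltnS.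
Qed.

Lemma card_dim_pred_weight (P : pred nat) :
  #|[set X : S | P (\dim X)]|%:R = \sum_(a < n.+1 | P a) weight a.
Proof. by rewrite card_dim_pred big_mkord natr_sum. Qed.

Lemma density_indicator C (P : pred nat) :
    (forall a, (a <= n)%N -> density C a = if P a then 1 else 0) ->
  C = [set X | P (\dim X)].
Proof.
move=> dC; apply/setP => X; rewrite inE.
set L := level F n (\dim X); have XL : X \in L by rewrite inE.
have w_ne0 : weight (\dim X) != 0 by rewrite gt_eqF ?weight_gt0 ?dimv_leqn.
have := dC _ (dimv_leqn X); rewrite /density; case: (P _) => dXC.
  have card_CL : #|C :&: L| = gauss F n (\dim X).
    by apply/eqP; rewrite -(eqr_nat rat) -(divfK w_ne0 (_%:R)) dXC mul1r.
  have /eqP CL : C :&: L == L by rewrite eqEcard subsetIr card_CL leqnn.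
  by move: XL; rewrite -CL => /setIP[].
have card_CL : #|C :&: L| = 0%N.
  by apply/eqP; rewrite -(eqr_nat rat) -(divfK w_ne0 (_%:R)) dXC mul0r.
by apply/negP => XC; move: (cards0_eq card_CL) => /setP/(_ X); rewrite inE XC XL inE.
Qed.

Lemma weight_sym a : (a <= n)%N -> weight (n - a) = weight a.
Proof. by move=> le_an; rewrite /weight gaussC. Qed.

Lemma weight_ltn a : (a.+1 < n - a)%N -> weight a < weight a.+1.
Proof. by move=> lt_a_na; rewrite ltr_nat gauss_ltn. Qed.

Lemma weight_middle k : n = k.+1.*2 -> 2 * weight k < weight k.+1.
Proof. by move=> def_n; rewrite -natrM ltr_nat gauss_middle. Qed.

End LevelDensities.

Lemma parity_code (F : finFieldType) n (C : {set subspace F n}) b :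
  {in C, forall X, odd (\dim X) = b} -> is_code 2 C.
Proof.
move=> oddC; apply/forall_inP => X XC; apply/forall_inP => Y YC; apply/implyP => neXY.
have := dimv_sum_cap X Y; have := oddC X XC; have := oddC Y YC; rewrite /dS.
have sIU := dimvS (subv_trans (capvSl X Y) (addvSl X Y)).
have eq_dim : \dim (X + Y) = \dim (X :&: Y) -> X = Y.
  move=> eqXY; have eqX : (X :&: Y)%VS = X.
    by apply/eqP; rewrite eqEdim capvSl /= -eqXY dimvS ?addvSl.
  by apply/eqP; rewrite -{1}eqX eqEdim capvSr /= -eqXY dimvS ?addvSr.
move: (\dim X) (\dim Y) (\dim (X + Y)) (\dim (X :&: Y)) sIU eq_dim => dX dY s c le_cs eq_sc.
move=> oY oX sum_dim.
have ne_sc : s != c by apply/eqP => /eq_sc eqXY; rewrite eqXY eqxx in neXY.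
have even_sc : ~~ odd (s - c) by rewrite oddB // -oddD sum_dim oddD oX oY addbb.
have : (0 < s - c)%N by rewrite subn_gt0 ltn_neqAle eq_sym ne_sc le_cs.
by move: even_sc; case: (s - c)%N => [|[|]].
Qed.

Lemma Aq_eq_card (F : finFieldType) n d (P : {set subspace F n}) :
  is_code d P -> (forall C : {set subspace F n}, is_code d C -> #|C| <= #|P|)%N ->
  Aq F n d = #|P|.
Proof.
move=> codeP maxP; apply/eqP; rewrite eqn_leq (leq_bigmax_cond _ codeP) andbT.
exact/bigmax_leqP.
Qed.

Lemma even_code_bound (F : finFieldType) k (C : {set subspace F k.*2}) : is_code 2 C ->
  let P := [set X : subspace F k.*2 | odd (\dim X) == odd k] in
  (#|C| <= #|P|)%N /\ (#|C| = #|P| -> C = P).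
Proof.
case: k C => [|k] C codeC P.
  have PT : P = setT.
    by apply/setP => X; rewrite !inE; have := dimv_leqn X; rewrite leqn0 => /eqP ->.
  rewrite PT subset_leq_card ?subsetT //; split => // card_CT.
  by apply/eqP; rewrite eqEcard subsetT card_CT leqnn.
have [le_sum eq_sum] := even_path_bound (w := weight F k.+1.*2) (y := density C)
  (weight_gt0 F (leq0n _))
  (fun a (lt_ak : (a < k)%N) => weight_ltn F (ltac:(lia) : a.+1 < k.+1.*2 - a)%N)
  (weight_middle F (erefl _)) (@weight_sym F _) (density_ge0 C)
  (fun a => @density_pair_le1 F _ C a codeC).
have card_P := @card_dim_pred_weight F k.+1.*2 (fun a => odd a == odd k.+1).
split; first by rewrite -(ler_nat rat) card_density card_P.
move=> eq_card; case: eq_sum => [|y_mid tight]; first by rewrite -card_density -card_P eq_card.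
have le_k1 : (k.+1 <= k.+1.*2)%N by lia.
have := tight_alternate tight le_k1; rewrite y_mid /= => y_k1.
apply: (density_indicator (P := fun a => odd a == odd k.+1)) => a le_an.
by rewrite (tight_alternate tight) //=; move: y_k1; case: (odd k); case: (odd a) => /= ?; lra.
Qed.

Lemma orthv_even_odd (F : finFieldType) n : odd n ->
  orthv @: [set X : subspace F n | ~~ odd (\dim X)] = [set X | odd (\dim X)].
Proof.
move=> odd_n; rewrite (can_imset_pre _ orthvK); apply/setP => X.
by rewrite !inE dim_orthv oddB ?dimv_leqn // odd_n; case: (odd _).
Qed.

Lemma card_even_odd (F : finFieldType) n : odd n ->
  #|[set X : subspace F n | ~~ odd (\dim X)]| = #|[set X : subspace F n | odd (\dim X)]|.
Proof. by move=> odd_n; rewrite -(orthv_even_odd F odd_n) card_imset //; exact: orthv_inj. Qed.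

Lemma card_even_dims (F : finFieldType) k :
  #|[set X : subspace F k.*2.+1 | ~~ odd (\dim X)]|%:R = \sum_(a < k.+1) weight F k.*2.+1 a.
Proof.
have total : \sum_(a < k.*2.+2) weight F k.*2.+1 a = 2 * \sum_(a < k.+1) weight F k.*2.+1 a.
  rewrite (sum_reflect _ (m := k.+1) (p := k.+1)); last by lia.
  have -> : \sum_(a < k.+1) weight F k.*2.+1 (k.*2.+1 - a)
           = \sum_(a < k.+1) weight F k.*2.+1 a.
    by apply: eq_bigr => a _; rewrite weight_sym //; have := ltn_ord a; lia.
  by rewrite mulr_natl mulr2n.
have odd_n : odd k.*2.+1 by rewrite /= odd_double.
move: total; rewrite (bigID (fun a : 'I__ => odd a)) /=.
rewrite -(card_dim_pred_weight _ _ odd) -(card_dim_pred_weight _ _ (fun a => ~~ odd a)).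
by rewrite -(card_even_odd F odd_n); lra.
Qed.

Lemma odd_code_bound (F : finFieldType) k (C : {set subspace F k.*2.+1}) : is_code 2 C ->
  let Ev := [set X : subspace F k.*2.+1 | ~~ odd (\dim X)] in
  let Od := [set X : subspace F k.*2.+1 | odd (\dim X)] in
  (#|C| <= #|Ev|)%N /\ (#|C| = #|Ev| -> C = Ev \/ C = Od).
Proof.
move=> codeC Ev Od.
have [le_sum eq_sum] := odd_path_bound (w := weight F k.*2.+1) (y := density C)
  (weight_gt0 F (leq0n _))
  (fun a (lt_ak : (a < k)%N) => weight_ltn F (ltac:(lia) : a.+1 < k.*2.+1 - a)%N)
  (@weight_sym F _) (fun a => @density_pair_le1 F _ C a codeC).
split; first by rewrite -(ler_nat rat) card_density (card_even_dims F k).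
move=> eq_card.
have eq_w : \sum_(a < k.*2.+2) weight F k.*2.+1 a * density C a
    = \sum_(a < k.+1) weight F k.*2.+1 a.
  by rewrite -(card_density C) -(card_even_dims F k) eq_card.
have {eq_sum} tight := eq_sum eq_w.
have [y0|y0] : density C 0 = 0 \/ density C 0 = 1.
  have : (#|C :&: level F k.*2.+1 0| <= 1)%N.
    by rewrite -(gauss0 F k.*2.+1) subset_leq_card ?subsetIr.
  by rewrite /density /weight gauss0 divr1; case: #|_| => [|[|]] //= _; [left | right].
- right; apply: (density_indicator (P := odd)) => a le_an.
  by rewrite (tight_alternate tight) // y0 subr0; case: (odd a).
- left; apply: (density_indicator (P := fun a => ~~ odd a)) => a le_an.
  by rewrite (tight_alternate tight) // y0 subrr; case: (odd a).
Qed.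

Local Close Scope ring_scope.

Theorem mainTheorem13 (F : finFieldType) :
  (forall k : nat,
     let v := (2 * k)%N in
     Aq F v 2 = (\sum_(0 <= i < v.+1 | odd i == odd k) gauss F v i)%N /\
     (forall C : {set subspace F v},
        is_code 2 C -> #|C| = Aq F v 2 ->
        C = [set X : subspace F v | odd (\dim X) == odd k])) /\
  (forall k : nat,
     let v := (2 * k).+1 in
     let Ev := [set X : subspace F v | ~~ odd (\dim X)] in
     let Od := [set X : subspace F v | odd (\dim X)] in
     Aq F v 2 = (\sum_(0 <= i < v.+1 | ~~ odd i) gauss F v i)%N /\
     Aq F v 2 = (\sum_(0 <= i < v.+1 | odd i) gauss F v i)%N /\
     (forall C : {set subspace F v},
        is_code 2 C -> #|C| = Aq F v 2 -> C = Ev \/ C = Od) /\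
     is_code 2 Ev /\ #|Ev| = Aq F v 2 /\
     is_code 2 Od /\ #|Od| = Aq F v 2 /\
     codes_isomorphic Ev Od).
Proof.
split=> k /=; rewrite mul2n.
  set P := [set X : subspace F k.*2 | odd (\dim X) == odd k].
  have codeP : is_code 2 P by apply: (parity_code (b := odd k)) => X /[!inE] /eqP.
  have AqP : Aq F k.*2 2 = #|P|.
    by apply: Aq_eq_card => // C codeC; case: (even_code_bound codeC).
  split; first by rewrite AqP (card_dim_pred F _ (fun i => odd i == odd k)).
  by move=> C codeC; rewrite AqP; case: (even_code_bound codeC).
set Ev := [set X : subspace F k.*2.+1 | ~~ odd (\dim X)].
set Od := [set X : subspace F k.*2.+1 | odd (\dim X)].
have odd_n : odd k.*2.+1 by rewrite /= odd_double.
have codeEv : is_code 2 Ev by apply: (parity_code (b := false)) => X /[!inE] /negbTE.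
have codeOd : is_code 2 Od by apply: (parity_code (b := true)) => X /[!inE].
have AqEv : Aq F k.*2.+1 2 = #|Ev|.
  by apply: Aq_eq_card => // C codeC; case: (odd_code_bound codeC).
have card_EvOd : #|Ev| = #|Od| := card_even_odd F odd_n.
rewrite AqEv; split; first exact: (card_dim_pred F _ (fun i => ~~ odd i)).
split; first by rewrite card_EvOd (card_dim_pred F _ odd).
split; first by move=> C codeC eq_card; case: (odd_code_bound codeC) => _; apply.
do !split => //.
exists orthv; split; last exact: orthv_even_odd.
by split; [exists orthv; exact: orthvK | exact: dS_orthv].
Qed.
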